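(* Let $T_1$ and $T_2$ be countable IILU-theories in the same predicate language $\Sigma$, and suppose that the restriction $T'_1$ of $T_1$ to the symbols that are non-empty for $T_1$ is language similar to the restriction $T'_2$ of $T_2$ to the symbols that are non-empty for $T_2$. Then $T_1$ and $T_2$ are language similar.
   Context: Theories are complete theories in predicate (relational) languages. A predicate symbol $R$ is non-empty for $T$ if $T\vdash\exists\bar x R(\bar x)$, and empty otherwise. A theory $T$ in a predicate language $\Sigma$ is language uniform (an LU-theory) if for each arity $n$, every permutation of the set of $n$-ary symbols that are non-empty for $T$ preserves $T$ (i.e., replacing each such symbol by its image maps $T$ onto $T$). An LU-theory $T$ is an IILU-theory if it has non-empty predicates and, whenever there is a non-empty $n$-ary predicate, there are infinitely many non-empty $n$-ary predicates and infinitely many empty $n$-ary predicates. A theory is countable if its language is countable. Theories $T_0,T_1$ in languages $\Sigma_0,\Sigma_1$ are language similar if $T_0$ can be obtained from $T_1$ by a bijective (arity-preserving) replacement of the symbols of $\Sigma_1$ by the symbols of $\Sigma_0$. *)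

From mathcomp Require Import all_boot.
Set Implicit Arguments. Unset Strict Implicit. Unset Printing Implicit Defensive.

Record signature := Signature { sym : Type; ar : sym -> nat }.

Inductive formula (L : signature) : Type :=
| FEq : nat -> nat -> formula L
| FRel : forall s : sym L, (ar s).-tuple nat -> formula L
| FNot : formula L -> formula L
| FAnd : formula L -> formula L -> formula L
| FEx : nat -> formula L -> formula L.

Arguments FEq {L}. Arguments FRel {L}. Arguments FNot {L}.
Arguments FAnd {L}. Arguments FEx {L}.

Fixpoint free (L : signature) (phi : formula L) (k : nat) : bool :=
  match phi with
  | FEq i j => (k == i) || (k == j)
  | FRel _ v => k \in (v : seq nat)
  | FNot p => free p k
  | FAnd p q => free p k || free q k
  | FEx i p => (k != i) && free p k
  end.

Definition sentence (L : signature) (phi : formula L) : Prop :=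
  forall k, free phi k = false.

Record structure (L : signature) := Structure {
  dom : Type;
  dom_inhabited : inhabited dom;
  interp : forall s : sym L, (ar s).-tuple dom -> Prop }.
Arguments interp {L} s0 s _ : rename.
Arguments dom {L} s : rename.

Fixpoint sat (L : signature) (M : structure L) (e : nat -> dom M)
  (phi : formula L) : Prop :=
  match phi with
  | FEq i j => e i = e j
  | FRel s v => interp M s (map_tuple e v)
  | FNot p => ~ sat e p
  | FAnd p q => sat e p /\ sat e q
  | FEx i p => exists a : dom M, sat (fun k => if k == i then a else e k) p
  end.
Arguments sat {L} M e phi.

Definition theory (L : signature) := formula L -> Prop.

Definition is_model (L : signature) (M : structure L) (T : theory L) : Prop :=
  forall phi, T phi -> forall e, sat M e phi.

(* T |- phi (semantic consequence; equivalent by the completeness theorem). *)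
Definition entails (L : signature) (T : theory L) (phi : formula L) : Prop :=
  forall M : structure L, is_model M T -> forall e, sat M e phi.

Definition complete_theory (L : signature) (T : theory L) : Prop :=
  (forall phi, T phi -> sentence phi) /\
  (exists M : structure L, is_model M T) /\
  (forall phi, sentence phi -> entails T phi \/ entails T (FNot phi)).

Definition countable_sig (L : signature) : Prop :=
  exists f : sym L -> nat, injective f.

Fixpoint rename (L1 L2 : signature) (f : sym L1 -> sym L2)
  (Hf : forall s, ar (f s) = ar s) (phi : formula L1) : formula L2 :=
  match phi with
  | FEq i j => FEq i j
  | FRel s v => FRel (f s) (tcast (esym (Hf s)) v)
  | FNot p => FNot (rename Hf p)
  | FAnd p q => FAnd (rename Hf p) (rename Hf q)
  | FEx i p => FEx i (rename Hf p)
  end.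

Fixpoint exs (L : signature) (n : nat) (phi : formula L) : formula L :=
  match n with
  | 0 => phi
  | k.+1 => FEx k (exs k phi)
  end.

Definition ex_rel (L : signature) (s : sym L) : formula L :=
  exs (ar s) (FRel s [tuple (i : nat) | i < ar s]).

Definition nonempty_pred (L : signature) (T : theory L) (s : sym L) : Prop :=
  entails T (ex_rel s).

(* Language similarity: T0 (over L0) is obtained from T1 (over L1) by a
   bijective arity-preserving replacement of symbols of L1 by those of L0,
   i.e. the renaming maps the set of consequences of T1 onto that of T0. *)
Definition lang_similar (L0 L1 : signature) (T0 : theory L0) (T1 : theory L1)
  : Prop :=
  exists (f : sym L1 -> sym L0) (Hf : forall s, ar (f s) = ar s),
    bijective f /\
    forall phi : formula L1, sentence phi ->
      (entails T1 phi <-> entails T0 (rename Hf phi)).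

(* Language uniformity: every permutation of the set of non-empty n-ary
   symbols (extended by the identity elsewhere) preserves T. *)
Definition LU (L : signature) (T : theory L) : Prop :=
  forall (n : nat) (f : sym L -> sym L) (Hf : forall s, ar (f s) = ar s),
    bijective f ->
    (forall s, nonempty_pred T s /\ ar s = n ->
               nonempty_pred T (f s) /\ ar (f s) = n) ->
    (forall s, ~ (nonempty_pred T s /\ ar s = n) -> f s = s) ->
    forall phi, sentence phi -> (entails T phi <-> entails T (rename Hf phi)).

Definition infinite_pred (A : Type) (P : A -> Prop) : Prop :=
  exists g : nat -> A, injective g /\ forall k, P (g k).

Definition IILU (L : signature) (T : theory L) : Prop :=
  LU T /\
  (exists s, nonempty_pred T s) /\
  (forall n, (exists s, nonempty_pred T s /\ ar s = n) ->
     infinite_pred (fun s => nonempty_pred T s /\ ar s = n) /\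
     infinite_pred (fun s => ~ nonempty_pred T s /\ ar s = n)).

Definition sub_sig (L : signature) (P : sym L -> Prop) : signature :=
  {| sym := {s : sym L | P s}; ar := fun s => ar (proj1_sig s) |}.

Definition restrict (L : signature) (T : theory L) (P : sym L -> Prop)
  : theory (sub_sig P) :=
  fun psi => sentence psi /\
    entails T (@rename (sub_sig P) L (fun s : sym (sub_sig P) => proj1_sig s)
                 (fun s => erefl) psi).
Arguments restrict {L} T P _.

(* A symbol that is empty for a complete theory T is empty in every model of
   T, so modulo T a sentence is equivalent to its translation into the
   sublanguage of non-empty symbols, where empty atoms become falsity; hence T
   is determined by its restriction T'.  A similarity of T'_2 with T'_1
   therefore extends to one of T_2 with T_1 by any arity-preserving bijection
   between the empty symbols of T_2 and those of T_1.  Such a bijection exists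
   arity by arity: the given similarity shows that T_1 and T_2 have non-empty
   n-ary symbols for the same n, for these n the IILU condition provides
   countably infinitely many empty n-ary symbols on both sides, and for the
   other n every n-ary symbol is empty for both theories. *)

From mathcomp Require Import all_boot.
From Stdlib Require Import Classical ClassicalEpsilon FunctionalExtensionality.
From Stdlib Require Import ProofIrrelevance.
Set Implicit Arguments. Unset Strict Implicit. Unset Printing Implicit Defensive.

Definition pullback (L1 L2 : signature) (f : sym L1 -> sym L2)
  (Hf : forall s, ar (f s) = ar s) (M : structure L2) : structure L1 :=
  @Structure L1 (dom M) (dom_inhabited M)
    (fun s v => interp M (f s) (tcast (esym (Hf s)) v)).

Lemma interp_congr (L : signature) (M : structure L) (a b : sym L)
  (u : (ar a).-tuple (dom M)) (w : (ar b).-tuple (dom M)) :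
  a = b -> val u = val w -> (interp M a u <-> interp M b w).
Proof. by move=> ab; subst b => uw; have -> : u = w by apply: val_inj. Qed.

Lemma sat_rename (L1 L2 : signature) (f : sym L1 -> sym L2)
  (Hf : forall s, ar (f s) = ar s) (M : structure L2) phi e :
  sat M e (rename Hf phi) <-> sat (pullback Hf M) e phi.
Proof.
elim: phi e => [i j|s v|p IH|p IHp q IHq|i p IH] e //=.
- by apply: interp_congr => //=; rewrite !val_tcast.
- by rewrite IH.
- by rewrite IHp IHq.
- by split=> -[a Ha]; exists a; apply/IH.
Qed.

Lemma free_rename (L1 L2 : signature) (f : sym L1 -> sym L2)
  (Hf : forall s, ar (f s) = ar s) phi k :
  free (rename Hf phi) k = free phi k.
Proof.
elim: phi => [i j|s v|p IH|p IHp q IHq|i p IH] //=.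
- by rewrite val_tcast.
- by rewrite IHp IHq.
- by rewrite IH.
Qed.

Lemma sentence_rename (L1 L2 : signature) (f : sym L1 -> sym L2)
  (Hf : forall s, ar (f s) = ar s) phi :
  sentence phi -> sentence (rename Hf phi).
Proof. by move=> H k; rewrite free_rename. Qed.

Lemma entails_congr (L : signature) (T : theory L) (phi psi : formula L) :
  (forall M, is_model M T -> forall e, sat M e phi <-> sat M e psi) ->
  (entails T phi <-> entails T psi).
Proof. by move=> E; split=> H M HM e; apply/(E M HM); apply: H. Qed.

Lemma sat_exs (L : signature) (M : structure L) phi n e e' :
  (forall k, n <= k -> e' k = e k) -> sat M e' phi -> sat M e (exs n phi).
Proof.
elim: n e e' => [|n IHn] e e' ee' /=.
  by have -> : e' = e by apply: functional_extensionality => k; apply: ee'.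
move=> He'; exists (e' n); apply: IHn He' => k nk.
by case: eqP => [->|/eqP kn] //; apply: ee'; rewrite ltn_neqAle eq_sym kn.
Qed.

Lemma free_exs (L : signature) (phi : formula L) n k :
  free (exs n phi) k -> (n <= k) && free phi k.
Proof.
elim: n => [|n IHn] //= /andP[kn /IHn /andP[nk ->]].
by rewrite andbT ltn_neqAle eq_sym kn.
Qed.

Lemma sentence_ex_rel (L : signature) (s : sym L) : sentence (ex_rel s).
Proof.
move=> k; apply/negP => /free_exs /andP[sk /tnthP[i]].
by rewrite tnth_mktuple => ki; move: (ltn_ord i); rewrite -ki ltnNge sk.
Qed.

Lemma sat_ex_rel (L : signature) (M : structure L) (s : sym L) v e :
  interp M s v -> sat M e (ex_rel s).
Proof.
move=> Hv; pose e' k := if k < ar s then nth (e 0) v k else e k.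
apply: (@sat_exs _ _ _ _ _ e') => [k|/=].
  by rewrite /e' ltnNge => ->.
suff -> : map_tuple e' [tuple (i : nat) | i < ar s] = v by [].
apply: eq_from_tnth => i.
by rewrite tnth_map tnth_mktuple /e' ltn_ord (tnth_nth (e 0)).
Qed.

Lemma interp_empty (L : signature) (T : theory L) (M : structure L) s v :
  complete_theory T -> is_model M T -> ~ nonempty_pred T s -> ~ interp M s v.
Proof.
move=> [_ [_ T_compl]] HM s_empty Hv.
have [//|T_no_s] := T_compl _ (sentence_ex_rel s).
have [a] := dom_inhabited M.
exact: (T_no_s M HM (fun _ => a) (sat_ex_rel _ Hv)).
Qed.

Definition lift_formula (L : signature) (P : sym L -> Prop) :
  formula (sub_sig P) -> formula L :=
  @rename (sub_sig P) L (fun s => proj1_sig s) (fun _ => erefl).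
Arguments lift_formula {L} P.

Lemma entails_restrict (L : signature) (T : theory L) (P : sym L -> Prop) psi :
  complete_theory T -> sentence psi ->
  (entails T (lift_formula P psi) <-> entails (restrict T P) psi).
Proof.
move=> [_ [[M HM] T_compl]] psi_sent; split=> [T_psi N HN e|restr_psi].
  by apply: HN.
pose val_P (s : sym (sub_sig P)) : sym L := proj1_sig s.
have [//|T_not_psi] := T_compl _ (sentence_rename (f := val_P) (fun _ => erefl) psi_sent).
have HM' : is_model (pullback (f := val_P) (fun _ => erefl) M) (restrict T P).
  by move=> phi [_ T_phi] e; apply/sat_rename; apply: T_phi.
have [a] := dom_inhabited M.
have restr_not_psi : restrict T P (FNot psi) by split=> // k; apply: psi_sent.
by case: (HM' _ restr_not_psi (fun _ => a)); apply: restr_psi.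
Qed.

Definition ffalse (L : signature) : formula L := FEx 0 (FNot (FEq 0 0)).

Fixpoint sub_formula (L : signature) (P : sym L -> Prop) (phi : formula L)
  : formula (sub_sig P) :=
  match phi with
  | FEq i j => FEq i j
  | FRel s v => match excluded_middle_informative (P s) with
                | left p => @FRel (sub_sig P) (exist P s p) v
                | right _ => ffalse _
                end
  | FNot p => FNot (sub_formula P p)
  | FAnd p q => FAnd (sub_formula P p) (sub_formula P q)
  | FEx i p => FEx i (sub_formula P p)
  end.

Lemma free_sub_formula (L : signature) (P : sym L -> Prop) phi k :
  free (sub_formula P phi) k -> free phi k.
Proof.
elim: phi => [i j|s v|p IH|p IHp q IHq|i p IH] //=.
- by case: excluded_middle_informative => //= _ /andP[/negbTE ->].
- by case/orP=> [/IHp|/IHq] ->; rewrite ?orbT.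
- by case/andP=> -> /IH.
Qed.

Lemma sentence_sub_formula (L : signature) (P : sym L -> Prop) phi :
  sentence phi -> sentence (sub_formula P phi).
Proof. by move=> phi_sent k; apply/negP => /free_sub_formula; rewrite phi_sent. Qed.

Lemma sat_sub_formula (L : signature) (P : sym L -> Prop) (K : structure L)
  (I : forall s : sym (sub_sig P), (ar s).-tuple (dom K) -> Prop) :
  (forall s (p : P s) v, interp K s v <-> I (exist P s p) v) ->
  (forall s, ~ P s -> forall v, ~ interp K s v) ->
  forall phi e, sat K e phi <->
     sat (@Structure (sub_sig P) (dom K) (dom_inhabited K) I) e (sub_formula P phi).
Proof.
move=> KI K_empty; elim=> [i j|s v|p IH|p IHp q IHq|i p IH] e //=.
- case: excluded_middle_informative => [p|np] /=; first exact: KI.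
  by split=> [/K_empty|[a /= Ha]].
- by rewrite IH.
- by rewrite IHp IHq.
- by split=> -[a Ha]; exists a; apply/IH.
Qed.

Lemma entails_sub_formula (L : signature) (T : theory L) (P : sym L -> Prop) phi :
  complete_theory T -> (forall s, ~ P s -> ~ nonempty_pred T s) -> sentence phi ->
  (entails T phi <-> entails (restrict T P) (sub_formula P phi)).
Proof.
move=> T_compl P_empty phi_sent.
rewrite -(entails_restrict T_compl (sentence_sub_formula P phi_sent)).
apply: entails_congr => M HM e; rewrite sat_rename.
apply: sat_sub_formula => [s p v|s /P_empty s_empty v].
  by apply: interp_congr => //=; rewrite val_tcast.
exact: interp_empty T_compl HM s_empty.
Qed.

Lemma entails_rename_sub_formula (L : signature) (T : theory L)
  (P Q : sym L -> Prop) (f : sym L -> sym L) (Hf : forall s, ar (f s) = ar s)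
  (g : sym (sub_sig P) -> sym (sub_sig Q)) (Hg : forall s, ar (g s) = ar s) phi :
  complete_theory T ->
  (forall s (p : P s), f s = proj1_sig (g (exist P s p))) ->
  (forall s, ~ P s -> ~ nonempty_pred T (f s)) -> sentence phi ->
  (entails T (rename Hf phi) <->
   entails (restrict T Q) (rename Hg (sub_formula P phi))).
Proof.
move=> T_compl f_in f_out phi_sent.
rewrite -(entails_restrict T_compl
           (sentence_rename Hg (sentence_sub_formula P phi_sent))).
apply: entails_congr => M HM e; rewrite !sat_rename.
apply: (sat_sub_formula (K := pullback Hf M)) => [s p v|s /f_out fs_empty v] /=.
  apply: interp_congr; first exact: f_in.
  exact: etrans (val_tcast _ _) (esym (val_tcast _ _)).
exact: interp_empty T_compl HM fs_empty.
Qed.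

Definition bij_on (X : Type) (A B : X -> Prop) (f : X -> X) : Prop :=
  [/\ forall x, A x -> B (f x),
      forall x y, A x -> A y -> f x = f y -> x = y &
      forall y, B y -> exists2 x, A x & f x = y].

Lemma inj_nat_unbounded (g : nat -> nat) : injective g -> forall m, exists k, m <= g k.
Proof.
move=> g_inj m; apply: NNPP => g_bounded.
have g_lt k : g k < m.
  by rewrite ltnNge; apply/negP => mk; apply: g_bounded; exists k.
have g_uniq : uniq (map g (iota 0 m.+1)) by rewrite map_inj_uniq // iota_uniq.
have g_sub : {subset map g (iota 0 m.+1) <= iota 0 m}.
  by move=> _ /mapP[k _ ->]; rewrite mem_iota add0n g_lt.
by have := uniq_leq_size g_uniq g_sub; rewrite size_map !size_iota ltnn.
Qed.

Definition bool_pred (S : nat -> Prop) : pred nat :=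
  fun k => if excluded_middle_informative (S k) then true else false.

Lemma bool_predP (S : nat -> Prop) k : reflect (S k) (bool_pred S k).
Proof. by rewrite /bool_pred; case: excluded_middle_informative => Sk; constructor. Qed.

Lemma increasing_enum (S : nat -> Prop) :
  (forall m, exists2 k, m <= k & S k) ->
  exists en : nat -> nat,
    [/\ forall k, S (en k), injective en & forall m, S m -> exists k, en k = m].
Proof.
move=> S_unbounded.
have S_above m : exists k, (m <= k) && bool_pred S k.
  by have [k mk Sk] := S_unbounded m; exists k; rewrite mk; apply/bool_predP.
pose next m := ex_minn (S_above m).
have nextP m : [/\ m <= next m, S (next m) & forall k, m <= k -> S k -> next m <= k].
  rewrite /next; case: ex_minnP => n /andP[mn /bool_predP Sn] n_min.
  by split=> // k mk Sk; apply: n_min; rewrite mk; apply/bool_predP.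
pose fix en k := if k is k'.+1 then next (en k').+1 else next 0.
have en_S k : S (en k) by case: k => [|k] /=; [case: (nextP 0) | case: (nextP (en k).+1)].
have en_lt k : en k < en k.+1 by case: (nextP (en k).+1).
have en_mono : {homo en : j k / j < k} := homo_ltn ltn_trans en_lt.
have en_ge k : k <= en k by elim: k => // k IHk; apply: leq_ltn_trans IHk (en_lt k).
exists en; split=> // [|m Sm]; first exact: incn_inj (leq_mono en_mono).
suff en_onto k : m <= en k -> exists j, en j = m by exact: en_onto (en_ge m).
elim: k => [|k IHk] m_le.
  by exists 0; apply/eqP; rewrite eqn_leq m_le andbT; case: (nextP 0) => _ _; apply.
have [|en_lt_m] := leqP m (en k); first exact: IHk.
exists k.+1; apply/eqP; rewrite eqn_leq m_le andbT.
by case: (nextP (en k).+1) => _ _; apply.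
Qed.

Lemma infinite_enum (X : Type) (c : X -> nat) (A : X -> Prop) :
  injective c -> infinite_pred A ->
  exists e : nat -> X,
    [/\ injective e, forall k, A (e k) & forall x, A x -> exists k, e k = x].
Proof.
move=> c_inj [i [i_inj Ai]].
pose S m := exists x, A x /\ c x = m.
have S_unbounded m : exists2 k, m <= k & S k.
  have [k mk] := inj_nat_unbounded (inj_comp c_inj i_inj) m.
  by exists (c (i k)) => //; exists (i k).
have [en [en_S en_inj en_onto]] := increasing_enum S_unbounded.
pose e k := proj1_sig (constructive_indefinite_description _ (en_S k)).
have eP k : A (e k) /\ c (e k) = en k.
  by rewrite /e; case: constructive_indefinite_description.
exists e; split=> [j k /(congr1 c)|k|x Ax]; first by rewrite !(proj2 (eP _)) => /en_inj.
  by case: (eP k).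
have [k en_k] := en_onto (c x) (ex_intro _ x (conj Ax erefl)).
by exists k; apply: c_inj; rewrite (proj2 (eP k)).
Qed.

Lemma infinite_bij_on (X : Type) (c : X -> nat) (A B : X -> Prop) :
  injective c -> infinite_pred A -> infinite_pred B -> exists f, bij_on A B f.
Proof.
move=> c_inj A_inf B_inf.
have [eA [eA_inj eA_A eA_onto]] := infinite_enum c_inj A_inf.
have [eB [eB_inj eB_B eB_onto]] := infinite_enum c_inj B_inf.
have index_ex x : exists k, A x -> eA k = x.
  by have [/eA_onto[k <-]|nAx] := classic (A x); [exists k | exists 0 => /nAx].
pose index x := proj1_sig (constructive_indefinite_description _ (index_ex x)).
have indexK x : A x -> eA (index x) = x.
  by rewrite /index; case: constructive_indefinite_description.
exists (fun x => eB (index x)); split=> [x _|x y Ax Ay /eB_inj idx_xy|y /eB_onto[k <-]].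
- exact: eB_B.
- by rewrite -(indexK x Ax) idx_xy indexK.
- by exists (eA k); [exact: eA_A | congr eB; apply: eA_inj; apply: indexK].
Qed.

Lemma bij_on_fibres (X I : Type) (a : X -> I) (A B : X -> Prop) :
  (forall i, exists h, bij_on (fun x => A x /\ a x = i) (fun x => B x /\ a x = i) h) ->
  exists2 h, bij_on A B h & forall x, A x -> a (h x) = a x.
Proof.
move=> fibre_bij.
pose hi i := proj1_sig (constructive_indefinite_description _ (fibre_bij i)).
have hiP i : bij_on (fun x => A x /\ a x = i) (fun x => B x /\ a x = i) (hi i).
  by rewrite /hi; case: constructive_indefinite_description.
pose h x := hi (a x) x.
have h_fibre x : A x -> B (h x) /\ a (h x) = a x.
  by move=> Ax; case: (hiP (a x)) => into _ _; apply: into.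
exists h => [|x /h_fibre[]//]; split=> [x /h_fibre[]//|x y Ax Ay hxy|y By].
- have axy : a x = a y by rewrite -(h_fibre x Ax).2 -(h_fibre y Ay).2 hxy.
  case: (hiP (a x)) => _ hi_inj _; apply: hi_inj => //.
  by move: hxy; rewrite /h -axy.
- case: (hiP (a y)) => _ _ /(_ y (conj By erefl))[x [Ax ax] hx].
  by exists x => //; rewrite /h ax.
Qed.

Lemma bij_on_complements (L : signature) (P Q : sym L -> Prop) (c : sym L -> nat)
  (g : sym (sub_sig P) -> sym (sub_sig Q)) :
  injective c -> (forall s, ar (g s) = ar s) -> bijective g ->
  (forall n, (exists s, P s /\ ar s = n) -> infinite_pred (fun s => ~ P s /\ ar s = n)) ->
  (forall n, (exists s, Q s /\ ar s = n) -> infinite_pred (fun s => ~ Q s /\ ar s = n)) ->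
  exists2 h, bij_on (fun s => ~ P s) (fun s => ~ Q s) h &
             forall s, ~ P s -> ar (h s) = ar s.
Proof.
move=> c_inj g_ar [g' gK g'K] P_inf Q_inf; apply: bij_on_fibres => n.
have [[s [Ps sn]]|no_P] := classic (exists s, P s /\ ar s = n).
  have Q_n : exists t, Q t /\ ar t = n.
    by exists (proj1_sig (g (exist P s Ps))); split; [exact: proj2_sig | rewrite -sn; exact: g_ar].
  exact: infinite_bij_on c_inj (P_inf n (ex_intro _ s (conj Ps sn))) (Q_inf n Q_n).
have no_Q t : ar t = n -> ~ Q t.
  move=> tn Qt; apply: no_P; exists (proj1_sig (g' (exist Q t Qt))).
  split; first exact: proj2_sig.
  by have := g_ar (g' (exist Q t Qt)); rewrite g'K /= => <-.
exists id; split=> // [x [_ xn]|y [_ yn]]; first by split=> //; apply: no_Q.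
by exists y => //; split=> // Py; apply: no_P; exists y.
Qed.

Lemma inj_surj_bijective (X Y : Type) (f : X -> Y) :
  injective f -> (forall y, exists x, f x = y) -> bijective f.
Proof.
move=> f_inj f_surj.
pose f' y := proj1_sig (constructive_indefinite_description _ (f_surj y)).
have f'K : cancel f' f by move=> y; rewrite /f'; case: constructive_indefinite_description.
by exists f' => // x; apply: f_inj; rewrite f'K.
Qed.

Section Glue.

Variables (L : signature) (P Q : sym L -> Prop).
Variables (g : sym (sub_sig P) -> sym (sub_sig Q)) (h : sym L -> sym L).
Hypothesis g_ar : forall s, ar (g s) = ar s.
Hypothesis g_bij : bijective g.
Hypothesis h_bij : bij_on (fun s => ~ P s) (fun s => ~ Q s) h.
Hypothesis h_ar : forall s, ~ P s -> ar (h s) = ar s.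

Definition glue (s : sym L) : sym L :=
  match excluded_middle_informative (P s) with
  | left p => proj1_sig (g (exist P s p))
  | right _ => h s
  end.

Lemma glue_in s (p : P s) : glue s = proj1_sig (g (exist P s p)).
Proof.
by rewrite /glue; case: excluded_middle_informative => // p'; rewrite (proof_irrelevance _ p p').
Qed.

Lemma glue_out s : ~ P s -> glue s = h s.
Proof. by rewrite /glue; case: excluded_middle_informative. Qed.

Lemma glue_ar s : ar (glue s) = ar s.
Proof.
have [p|np] := classic (P s); first by rewrite (glue_in p); apply: g_ar.
by rewrite glue_out // h_ar.
Qed.

Lemma glue_out_of_Q s : ~ P s -> ~ Q (glue s).
Proof. by move=> np; rewrite glue_out //; case: h_bij => into _ _; apply: into. Qed.

Lemma glue_bij : bijective glue.
Proof.
have [g' gK g'K] := g_bij; have [_ h_inj h_onto] := h_bij.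
have val_inj_sig (R : sym L -> Prop) (u w : sig R) : proj1_sig u = proj1_sig w -> u = w.
  by case: u w => [x ?] [y ?] /= xy; subst y; congr exist; apply: proof_irrelevance.
apply: inj_surj_bijective => [x y|t].
  have [px|nx] := classic (P x); have [py|ny] := classic (P y).
  - by rewrite !glue_in => /val_inj_sig/(can_inj gK)/(congr1 (@proj1_sig _ _)).
  - by rewrite glue_in => gxy; case: (glue_out_of_Q ny); rewrite -gxy; apply: proj2_sig.
  - by rewrite (glue_in py) => gxy; case: (glue_out_of_Q nx); rewrite gxy; apply: proj2_sig.
  - by rewrite !glue_out //; apply: h_inj.
have [qt|nqt] := classic (Q t).
  case E: (g' (exist Q t qt)) => [s ps].
  by exists s; rewrite (glue_in ps) -E g'K.
by have [s ns <-] := h_onto t nqt; exists s; rewrite glue_out.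
Qed.

End Glue.

Theorem corollary4p3 (L : signature) (T1 T2 : theory L) :
  countable_sig L ->
  complete_theory T1 -> complete_theory T2 ->
  IILU T1 -> IILU T2 ->
  lang_similar (restrict T1 (nonempty_pred T1))
               (restrict T2 (nonempty_pred T2)) ->
  lang_similar T1 T2.
Proof.
move=> [c c_inj] T1_compl T2_compl [_ [_ T1_inf]] [_ [_ T2_inf]] [g [g_ar [g_bij g_sim]]].
have [h h_bij h_ar] := bij_on_complements c_inj g_ar g_bij
  (fun n Pn => (T2_inf n Pn).2) (fun n Qn => (T1_inf n Qn).2).
exists (glue g h), (glue_ar g_ar h_ar); split; first exact: glue_bij.
move=> phi phi_sent.
rewrite (entails_sub_formula (P := nonempty_pred T2) T2_compl _ phi_sent) //.
rewrite g_sim; last exact: sentence_sub_formula.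
rewrite (entails_rename_sub_formula _ g_ar T1_compl _ _ phi_sent) //.
- exact: glue_in.
- exact: glue_out_of_Q h_bij.
Qed.
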